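(* Let $N\ge 1$ be an integer and let $\lambda>0$, $\mu>0$, $\Delta\ge 0$ be real numbers. For each integer $c\in\{1,\dots,N\}$ put $$a(c)=\lambda\Big(\Delta+\frac{c}{N\mu}\Big),\qquad P_b(c)=\frac{a(c)^{c}/c!}{\sum_{j=0}^{c}a(c)^{j}/j!}.$$ Then $P_b(c)$ is decreasing in $c$ on $\{1,\dots,N\}$; in particular its minimum is attained at $c=N$ (i.e. replication factor $m=1$).
   Context: Model: an edge system has $N$ workers split into $c$ groups of $m=N/c$ workers each (the replication factor). Jobs arrive as a Poisson process of rate $\lambda$; each arriving job is replicated to all $m$ workers of a free group and a job finding all groups busy is blocked (sent to the cloud). Each worker's service time is shifted exponential $\mathrm{SExp}(\Delta,\mu)$, i.e. $\Delta+Y$ with $Y$ exponential of rate $\mu$; the job-computing time of a replicated job (minimum of $m$ i.i.d. copies) is $\mathrm{SExp}(\Delta,m\mu)$ with mean $\Delta+\frac{1}{m\mu}=\Delta+\frac{c}{N\mu}$. The system is modeled as an M/G/c/c loss queue, so the job-blocking probability is the Erlang B formula $P_b(c)$ above with offered load $a(c)=\lambda\,\mathbb{E}[T_{\text{job}}]$. *)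

From mathcomp Require Import all_boot all_order all_algebra.
From mathcomp Require Import reals.
Set Implicit Arguments. Unset Strict Implicit. Unset Printing Implicit Defensive.
Import Order.TTheory GRing.Theory Num.Theory.
Local Open Scope ring_scope.

Definition offered_load (R : realType) (N : nat) (lam mu Delta : R) (c : nat) : R :=
  lam * (Delta + c%:R / (N%:R * mu)).

Definition erlangB (R : realType) (c : nat) (a : R) : R :=
  (a ^+ c / (c`!)%:R) / (\sum_(j < c.+1) a ^+ j / (j`!)%:R).

Definition Pb (R : realType) (N : nat) (lam mu Delta : R) (c : nat) : R :=
  erlangB c (offered_load N lam mu Delta c).

(* The reciprocal of the Erlang B formula obeys the recursion
   1/B(0,a) = 1 and 1/B(c+1,a) = 1 + (c+1)/a * 1/B(c,a).  Going from c to c+1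
   groups adds one server and raises the load a(c) = lam Delta + c d by
   d = lam/(N mu) <= a(c)/c; by induction on n, whenever n d <= a we get
   1/B(n,a) < 1/B(n+1,a+d), since (n+1)/a <= (n+2)/(a+d) is exactly
   (n+1) d <= a. *)
From mathcomp Require Import all_boot all_order all_algebra.
From mathcomp Require Import reals ring.
Import Order.TTheory GRing.Theory Num.Theory.
Local Open Scope ring_scope.

Section ErlangB.
Variable R : realType.
Implicit Types (a d : R) (c n : nat).

Fixpoint erlangB_inv a c : R :=
  if c is c'.+1 then 1 + c%:R / a * erlangB_inv a c' else 1.

Lemma erlangB_invS a c :
  erlangB_inv a c.+1 = 1 + c.+1%:R / a * erlangB_inv a c.
Proof. by []. Qed.

Lemma erlangB_inv_gt0 a c : 0 < a -> 0 < erlangB_inv a c.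
Proof.
move=> a_gt0; elim: c => [|c IHc] //=.
by rewrite ltr_wpDr // mulr_ge0 ?divr_ge0 ?ltW.
Qed.

Lemma erlangB_invE a c : a != 0 ->
  erlangB_inv a c = (\sum_(j < c.+1) a ^+ j / (j`!)%:R) * (c`!)%:R / a ^+ c.
Proof.
move=> a_neq0; elim: c => [|c IHc] /=.
  by rewrite big_ord1 /= !expr0 !divr1 mul1r.
rewrite [in RHS]big_ord_recr /= IHc factS natrM exprS -natr1.
have fact_neq0 : (c`!)%:R != 0 :> R by rewrite pnatr_eq0 -lt0n fact_gt0.
have ac_neq0 : a ^+ c != 0 by rewrite expf_neq0.
have c1_neq0 : c%:R + 1 != 0 :> R by rewrite natr1 pnatr_eq0.
by field; rewrite fact_neq0 ac_neq0 a_neq0 c1_neq0.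
Qed.

Lemma erlangBE a c : 0 < a -> erlangB c a = (erlangB_inv a c)^-1.
Proof.
move=> a_gt0; rewrite erlangB_invE ?gt_eqF // /erlangB.
have fact_neq0 : (c`!)%:R != 0 :> R by rewrite pnatr_eq0 -lt0n fact_gt0.
have ac_neq0 : a ^+ c != 0 by rewrite expf_neq0 // gt_eqF.
have sum_gt0 : 0 < \sum_(j < c.+1) a ^+ j / (j`!)%:R.
  rewrite big_ord_recl expr0 fact0 divr1 ltr_wpDr //.
  by apply: sumr_ge0 => j _; rewrite divr_ge0 ?exprn_ge0 // ltW.
by field; rewrite fact_neq0 ac_neq0 gt_eqF.
Qed.

Lemma erlangB_inv_lt_succ a d n : 0 < a -> 0 <= d -> n%:R * d <= a ->
  erlangB_inv a n < erlangB_inv (a + d) n.+1.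
Proof.
move=> a_gt0 d_ge0; have ad_gt0 : 0 < a + d by rewrite ltr_wpDr.
elim: n => [|n IHn] nd_le_a.
  by rewrite /= mulr1 ltrDl divr_gt0.
have nd_le_a' : n%:R * d <= a.
  by apply: le_trans nd_le_a; rewrite ler_wpM2r // ler_nat.
have coef_le : n.+1%:R / a <= n.+2%:R / (a + d).
  rewrite ler_pdivrMr // mulrAC ler_pdivlMr //.
  by rewrite mulrDr -[n.+2]addn1 natrD mulrDl mul1r lerD2l.
rewrite erlangB_invS [X in _ < X]erlangB_invS ltrD2l.
apply: le_lt_trans (ler_wpM2r (ltW (erlangB_inv_gt0 _ n a_gt0)) coef_le) _.
by rewrite ltr_pM2l ?divr_gt0 // IHn.
Qed.

Lemma erlangB_succ_lt a d n : 0 < a -> 0 <= d -> n%:R * d <= a ->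
  erlangB n.+1 (a + d) < erlangB n a.
Proof.
move=> a_gt0 d_ge0 nd_le_a; have ad_gt0 : 0 < a + d by rewrite ltr_wpDr.
rewrite !erlangBE // ltf_pV2 ?posrE ?erlangB_inv_gt0 //.
exact: erlangB_inv_lt_succ.
Qed.

End ErlangB.

Lemma offered_loadE (R : realType) (N : nat) (lam mu Delta : R) c :
  offered_load N lam mu Delta c = lam * Delta + c%:R * (lam / (N%:R * mu)).
Proof. by rewrite /offered_load mulrDr mulrCA. Qed.

Section BlockingProbability.
Variables (R : realType) (N : nat) (lam mu Delta : R).
Hypotheses (lam_gt0 : 0 < lam) (mu_gt0 : 0 < mu) (Delta_ge0 : 0 <= Delta).

Lemma Pb_succ_lt c : (0 < c < N)%N ->
  Pb N lam mu Delta c.+1 < Pb N lam mu Delta c.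
Proof.
move=> /andP[c_gt0 cN].
set d := lam / (N%:R * mu).
have d_gt0 : 0 < d by rewrite divr_gt0 // mulr_gt0 // ltr0n (ltn_trans c_gt0).
have lamDelta_ge0 : 0 <= lam * Delta by rewrite mulr_ge0 // ltW.
have load_succ : offered_load N lam mu Delta c.+1
               = offered_load N lam mu Delta c + d.
  by rewrite !offered_loadE -/d -natr1 mulrDl mul1r addrA.
rewrite /Pb load_succ erlangB_succ_lt ?(ltW d_gt0) // offered_loadE -/d.
  by rewrite ltr_wpDl // mulr_gt0 // ltr0n.
by rewrite lerDr.
Qed.

Lemma Pb_lt c1 c2 : (0 < c1)%N -> (c1 < c2 <= N)%N ->
  Pb N lam mu Delta c2 < Pb N lam mu Delta c1.
Proof.
pose D : {pred nat} := [pred c | 0 < c <= N]%N.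
have D_convex : {in D &, forall i j k, i < k < j -> k \in D}%N.
  move=> i j; rewrite !inE => /andP[i_gt0 _] /andP[_ jN] k /andP[ik kj].
  by rewrite inE (ltn_trans i_gt0 ik) (leq_trans (ltnW kj) jN).
have Pb_dec : {in D &, {homo Pb N lam mu Delta : i j / (i < j)%N >-> j < i}}.
  apply: homo_ltn_in D_convex _ => [y x z yx zy|]; first exact: lt_trans zy yx.
  by move=> c /[!inE] /andP[c_gt0 _] /andP[_ cN]; rewrite Pb_succ_lt ?c_gt0.
move=> c1_gt0 /andP[c12 c2N]; apply: Pb_dec => //; rewrite inE.
- by rewrite c1_gt0 (leq_trans (ltnW c12) c2N).
- by rewrite c2N (ltn_trans c1_gt0 c12).
Qed.

End BlockingProbability.

Theorem theorem1 (R : realType) (N : nat) (lam mu Delta : R) :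
  (1 <= N)%N -> 0 < lam -> 0 < mu -> 0 <= Delta ->
  (forall c1 c2 : nat, (1 <= c1)%N -> (c1 < c2)%N -> (c2 <= N)%N ->
     Pb N lam mu Delta c2 < Pb N lam mu Delta c1) /\
  (forall c : nat, (1 <= c)%N -> (c <= N)%N ->
     Pb N lam mu Delta N <= Pb N lam mu Delta c).
Proof.
move=> _ lam_gt0 mu_gt0 Delta_ge0.
have Pb_decreasing c1 c2 : (1 <= c1)%N -> (c1 < c2)%N -> (c2 <= N)%N ->
    Pb N lam mu Delta c2 < Pb N lam mu Delta c1.
  by move=> c1_gt0 c12 c2N; rewrite Pb_lt // c12.
split=> // c c_gt0; rewrite leq_eqVlt => /orP[/eqP-> //| cN].
exact/ltW/Pb_decreasing.
Qed.
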